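(* Under the Standing Setup (see context), let $\{x^k\}$ be generated by Algorithm 1 and let $x^*$ be its limit, with $f(x^* )=\inf_{x\in B[\bar x,\beta]}f(x)$. Given $\epsilon>0$ and an integer $T$, suppose that $$\|x^{k+1}-x^k\|>\epsilon\quad\text{for } k=0,\dots,T.$$ Then $$T<2+\frac{2}{\rho}\bigl(f(x^0)-f(x^* )\bigr)\epsilon^{-2}.$$
   Context: $B(x,r)$, $B[x,r]$: open and closed Euclidean balls. For $\mu>0$: $e_\mu f(x):=\min_y\{f(y)+\frac{1}{2\mu}\|y-x\|^2\}$ (Moreau envelope), $P_\mu f(x):=\operatorname{argmin}_y\{f(y)+\frac{1}{2\mu}\|y-x\|^2\}$ (proximal operator). $\partial f$: limiting subdifferential. $f$ is $\rho$-weakly convex on $U$ if $f(\alpha x+(1-\alpha)y)\le \alpha f(x)+(1-\alpha)f(y)+\frac{\rho\alpha(1-\alpha)}{2}\|x-y\|^2$ for all $x,y\in U$, $\alpha\in[0,1]$. Standing Fact (cited): if $f$ is $\rho$-weakly convex on $\mathbb{R}^n$, $\rho>0$, $0\in\partial f(\bar x)$ and $\mu\in(0,1/\rho)$, there is $\alpha>0$ such that on $B[\bar x,\alpha]$, $P_\mu f$ is single-valued, $1/(1-\mu\rho)$-Lipschitz, equal to $(I+\mu\partial f)^{-1}$, and $e_\mu f$ is $C^1$ with $\nabla e_\mu f(x)=\mu^{-1}(x-P_\mu f(x))$. Standing Setup: $f:\mathbb{R}^n\to\mathbb{R}\cup\{+\infty\}$ is proper, lower semicontinuous, bounded below and $\rho$-weakly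 convex on $\mathbb{R}^n$, $\rho>0$; $\bar x\in\operatorname{dom}f$ with $0\in\partial f(\bar x)$. Fix $\bar\lambda>0$ and bounded sequences $\{\gamma_k\},\{\lambda_k\}$ with $0<\bar\lambda<2\gamma_k<\lambda_k<1/\rho$ for all $k$. Let $\delta>0$ be such that, for every $k$, the Standing Fact holds on $B[\bar x,\delta]$ for $\mu=\gamma_k$ and $\mu=\lambda_k$, and (Assumption 1) the Moreau envelopes $e_{\gamma_k}f$ and $e_{\lambda_k}f$ are convex on $B[\bar x,\delta]$. For each $k$ let $L_k:=1+\frac{\lambda_k-\gamma_k}{\gamma_k}\bigl(1+\frac{1}{1-\gamma_k\rho}\bigr)$, pick $\sigma_k\in(0,2/L_k^2)$, set $\kappa_k:=1-2\sigma_k+\sigma_k^2L_k^2$, and let $\beta>0$ satisfy $\beta<\min\{\delta,\frac{\delta}{\sigma_k}(1-\sqrt{\kappa_k})\}$ for all $k$. Algorithm 1: choose $x^0\in B[\bar x,\beta]$. Given $x^k\in B[\bar x,\beta]$: (a) compute $z^k\in B(\bar x,\delta)$ with $z^k=x^k-(\lambda_k-\gamma_k)\nabla e_{\gamma_k}f(z^k)$; (b) set $x^{k+1}=z^k-\gamma_k(\lambda_k-\gamma_k)^{-1}(x^k-z^k)$. *)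

(* R^n is 'rV[R]_n with the EUCLIDEAN
   norm defined below (MathComp's built-in norm on 'rV is the max norm). *)
From HB Require Import structures.
From mathcomp Require Import all_boot all_order all_algebra.
From mathcomp Require Import all_classical all_reals.
From mathcomp Require Import ereal.
Set Implicit Arguments. Unset Strict Implicit. Unset Printing Implicit Defensive.
Import Order.TTheory GRing.Theory Num.Theory.
Local Open Scope ring_scope.
Local Open Scope classical_set_scope.

Section Defs.
Variables (R : realType) (n : nat).
Local Notation V := 'rV[R]_n.

Definition dotv (u v : V) : R := \sum_(i < n) u ord0 i * v ord0 i.
Definition enorm (u : V) : R := Num.sqrt (dotv u u).

Definition oball (x : V) (r : R) : set V := [set y | enorm (y - x) < r].
Definition cball (x : V) (r : R) : set V := [set y | enorm (y - x) <= r].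

Definition vcvg (u : nat -> V) (l : V) : Prop :=
  forall e : R, 0 < e -> exists N : nat, forall k, (N <= k)%N -> enorm (u k - l) < e.
Definition rcvg (u : nat -> R) (l : R) : Prop :=
  forall e : R, 0 < e -> exists N : nat, forall k, (N <= k)%N -> `|u k - l| < e.

Definition proper_fun (f : V -> \bar R) : Prop :=
  (exists x, f x < +oo)%E /\ (forall x, f x != -oo%E).
Definition lsc (f : V -> \bar R) : Prop :=
  forall x (a : R), (a%:E < f x)%E ->
    exists d : R, 0 < d /\ forall y, enorm (y - x) < d -> (a%:E < f y)%E.
Definition bounded_below (f : V -> \bar R) : Prop :=
  exists m : R, forall x, (m%:E <= f x)%E.
Definition dom (f : V -> \bar R) : set V := [set x | f x \is a fin_num].

Definition weakly_convex_on (rho : R) (U : set V) (f : V -> \bar R) : Prop :=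
  forall x y (a : R), U x -> U y -> 0 <= a <= 1 ->
    (f ((a *: x + (1 - a) *: y)%R) <=
      a%:E * f x + (1 - a)%:E * f y
      + (rho * a * (1 - a) / 2 * enorm (x - y) ^+ 2)%:E)%E.

Definition convex_on (U : set V) (g : V -> \bar R) : Prop :=
  forall x y (a : R), U x -> U y -> 0 <= a <= 1 ->
    (g ((a *: x + (1 - a) *: y)%R) <= a%:E * g x + (1 - a)%:E * g y)%E.

(* Frechet (regular) subdifferential:
   v in d^f(x) iff f(x) finite and liminf_{y->x} (f y - f x - <v,y-x>)/|y-x| >= 0 *)
Definition frechet_subdiff (f : V -> \bar R) (x v : V) : Prop :=
  f x \is a fin_num /\
  forall e : R, 0 < e -> exists d : R, 0 < d /\
    forall y, enorm (y - x) < d ->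
      (((fine (f x) + dotv v (y - x) - e * enorm (y - x))%R)%:E <= f y)%E.

Definition limiting_subdiff (f : V -> \bar R) (x v : V) : Prop :=
  f x \is a fin_num /\
  exists (xs vs : nat -> V),
    vcvg xs x /\ rcvg (fun k => fine (f (xs k))) (fine (f x)) /\
    (forall k, frechet_subdiff f (xs k) (vs k)) /\ vcvg vs v.

Definition moreau (f : V -> \bar R) (mu : R) (x : V) : \bar R :=
  ereal_inf [set (f y + (enorm (y - x) ^+ 2 / (2 * mu))%:E)%E | y in [set: V]].

Definition prox (f : V -> \bar R) (mu : R) (x : V) : set V :=
  [set p | (f p + (enorm (p - x) ^+ 2 / (2 * mu))%:E)%E = moreau f mu x
           /\ (forall y, (f p + (enorm (p - x) ^+ 2 / (2 * mu))%:E <=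
                          f y + (enorm (y - x) ^+ 2 / (2 * mu))%:E)%E)].

Definition resolvent (f : V -> \bar R) (mu : R) (x : V) : set V :=
  [set q | exists v, limiting_subdiff f q v /\ x = q + mu *: v].

Definition has_grad (g : V -> R) (x G : V) : Prop :=
  forall e : R, 0 < e -> exists d : R, 0 < d /\
    forall y, enorm (y - x) < d ->
      `|g y - g x - dotv G (y - x)| <= e * enorm (y - x).

Definition C1_on_with_grad (U : set V) (g : V -> R) (G : V -> V) : Prop :=
  (forall x, U x -> has_grad g x (G x)) /\
  (forall x, U x -> forall e : R, 0 < e -> exists d : R, 0 < d /\
     forall y, U y -> enorm (y - x) < d -> enorm (G y - G x) < e).

(* Conclusion of the Standing Fact for parameter mu on the ball B[c, a]:
   P_mu f is single-valued (given by P), (1/(1 - mu rho))-Lipschitz,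
   equal to (I + mu df)^{-1}, and e_mu f is C^1 (finite) with
   grad e_mu f (x) = mu^{-1} (x - P_mu f (x)). *)
Definition standing_fact_on (f : V -> \bar R) (rho mu : R) (c : V) (a : R) : Prop :=
  exists P : V -> V,
    (forall x, cball c a x -> prox f mu x = [set P x]) /\
    (forall x y, cball c a x -> cball c a y ->
       enorm (P x - P y) <= (1 - mu * rho)^-1 * enorm (x - y)) /\
    (forall x, cball c a x -> prox f mu x = resolvent f mu x) /\
    (forall x, cball c a x -> moreau f mu x \is a fin_num) /\
    C1_on_with_grad (cball c a) (fun x => fine (moreau f mu x))
                    (fun x => mu^-1 *: (x - P x)).

End Defs.

From HB Require Import structures.
From mathcomp Require Import all_boot all_order all_algebra.
From mathcomp Require Import all_classical all_reals.
From mathcomp Require Import ereal.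
From mathcomp Require Import ring lra.
Set Implicit Arguments. Unset Strict Implicit. Unset Printing Implicit Defensive.
Import Order.TTheory GRing.Theory Num.Theory.
Local Open Scope ring_scope.
Local Open Scope classical_set_scope.

(* The key observation is that each iterate is a proximal step of the larger
   parameter: x^{k+1} = P_{lambda_k} f (x^k).  Indeed step (a) says that
   (lambda_k - gamma_k)^{-1}(x^k - z^k) is the gradient of e_{gamma_k} f at z^k,
   hence (gradients being unique) equals gamma_k^{-1}(z^k - P_{gamma_k} f(z^k));
   so x^{k+1} = P_{gamma_k} f(z^k) lies in (I + gamma_k df)^{-1}(z^k), which
   shifts to x^{k+1} in (I + lambda_k df)^{-1}(x^k) = P_{lambda_k} f(x^k).
   Comparing the proximal objective at x^{k+1} and at x^k gives the descent
   f(x^{k+1}) + |x^{k+1} - x^k|^2 / (2 lambda_k) <= f(x^k), and lambda_k < 1/rho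
   turns each long step into a decrease of at least rho eps^2 / 2.  Summing
   over k = 0..T and using f(x^{T+1}) >= f(x^* ) (x^{T+1} is in B[xbar, beta])
   bounds T. *)

Section Euclidean.
Variables (R : realType) (n : nat).
Local Notation V := 'rV[R]_n.

Lemma dotvBl (a b w : V) : dotv a w - dotv b w = dotv (a - b) w.
Proof. by rewrite /dotv -sumrB; apply: eq_bigr => i _; rewrite !mxE; ring. Qed.

Lemma dotvZr (a w : V) (s : R) : dotv a (s *: w) = s * dotv a w.
Proof. by rewrite /dotv mulr_sumr; apply: eq_bigr => i _; rewrite !mxE; ring. Qed.

Lemma dotvv_ge0 (a : V) : 0 <= dotv a a.
Proof. by apply: sumr_ge0 => i _; rewrite -expr2 sqr_ge0. Qed.

Lemma dotvZZ (a : V) (s : R) : dotv (s *: a) (s *: a) = s ^+ 2 * dotv a a.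
Proof. by rewrite /dotv mulr_sumr; apply: eq_bigr => i _; rewrite !mxE; ring. Qed.

Lemma enorm_sqr (a : V) : enorm a ^+ 2 = dotv a a.
Proof. by rewrite sqr_sqrtr // dotvv_ge0. Qed.

Lemma enormZ (a : V) (s : R) : 0 <= s -> enorm (s *: a) = s * enorm a.
Proof. by move=> s0; rewrite /enorm dotvZZ sqrtrM ?sqr_ge0 // sqrtr_sqr ger0_norm. Qed.

Lemma enorm0 : enorm (0 : V) = 0.
Proof. by rewrite /enorm /dotv big1 ?sqrtr0 // => i _; rewrite mxE mul0r. Qed.

Lemma dotvv_eq0 (a : V) : dotv a a = 0 -> a = 0.
Proof.
move=> a0; apply/matrixP => i j; rewrite (ord1 i) mxE.
have sq_ge0 (k : 'I_n) : true -> 0 <= a ord0 k * a ord0 k by rewrite -expr2 sqr_ge0.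
by move: (@psumr_eq0P _ _ _ _ sq_ge0 a0 j isT) => /eqP; rewrite mulf_eq0 orbb => /eqP.
Qed.

(* Two gradients G1, G2 of g at z satisfy |<G1 - G2, y - z>| <= 2e|y - z| near z;
   testing with y - z a small multiple of G1 - G2 gives |G1 - G2|^2 <= 2e|G1 - G2|. *)
Lemma grad_diff_bound (g : V -> R) (z G1 G2 : V) (e : R) :
  has_grad g z G1 -> has_grad g z G2 -> 0 < e ->
  enorm (G1 - G2) ^+ 2 <= 2 * e * enorm (G1 - G2).
Proof.
move=> h1 h2 e0; set u := G1 - G2.
have [d1 [d10 H1]] := h1 e e0; have [d2 [d20 H2]] := h2 e e0.
have nu0 : 0 <= enorm u by exact: sqrtr_ge0.
set t := Num.min d1 d2 / (enorm u + 1).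
have t0 : 0 < t by rewrite divr_gt0 ?lt_min ?d10 ?d20 // ltr_wpDl.
have Ez : z + t *: u - z = t *: u by rewrite addrAC subrr add0r.
have small : enorm (t *: u) < Num.min d1 d2.
  rewrite (enormZ _ (ltW t0)) /t mulrAC ltr_pdivrMr ?ltr_wpDl //.
  by rewrite ltr_pM2l ?ltrDl // lt_min d10 d20.
move: small; rewrite lt_min => /andP[s1 s2].
move: (H1 (z + t *: u)) (H2 (z + t *: u)); rewrite Ez => /(_ s1) A1 /(_ s2) A2.
move: A1 A2; set gg := g (z + t *: u) - g z => A1 A2.
have : `|dotv G1 (t *: u) - dotv G2 (t *: u)| <= 2 * e * enorm (t *: u).
  have -> : dotv G1 (t *: u) - dotv G2 (t *: u) =
    (gg - dotv G2 (t *: u)) - (gg - dotv G1 (t *: u)) by ring.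
  by apply: le_trans (ler_normB _ _) _; lra.
rewrite dotvBl dotvZr -enorm_sqr (enormZ _ (ltW t0)) ger0_norm; last first.
  by rewrite mulr_ge0 ?sqr_ge0 ?ltW.
by rewrite -/u [2 * e * _]mulrCA ler_pM2l.
Qed.

Lemma grad_unique (g : V -> R) (z G1 G2 : V) :
  has_grad g z G1 -> has_grad g z G2 -> G1 = G2.
Proof.
move=> h1 h2; apply/eqP; rewrite -subr_eq0; apply/eqP; apply: dotvv_eq0.
set N := enorm (G1 - G2).
have N0 : 0 <= N by exact: sqrtr_ge0.
suff : N = 0 by rewrite -enorm_sqr -/N => ->; rewrite expr0n.
apply/eqP; rewrite eq_le N0 andbT leNgt; apply/negP => Npos.
have := grad_diff_bound h1 h2 (divr_gt0 Npos (ltr0Sn _ 3)).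
have -> : 2 * (N / 4) * N = N ^+ 2 / 2 by field.
have : 0 < N ^+ 2 by rewrite exprn_gt0.
rewrite -/N; lra.
Qed.

End Euclidean.

Section Proximal.
Variables (R : realType) (n : nat) (f : 'rV[R]_n -> \bar R).
Local Notation V := 'rV[R]_n.

Lemma prox_descent (mu : R) (x p : V) :
  prox f mu x p -> (f p + (enorm (p - x) ^+ 2 / (2 * mu))%:E <= f x)%E.
Proof. by case=> _ /(_ x); rewrite subrr enorm0 expr0n /= mul0r adde0. Qed.

Variables (rho : R) (c : V) (d : R).

(* Where the Standing Fact holds, proximal points lie in the domain of f,
   because they are resolvent points, at which the subdifferential is nonempty. *)
Lemma prox_fin_num (mu : R) (x p : V) :
  standing_fact_on f rho mu c d -> cball c d x -> prox f mu x p ->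
  f p \is a fin_num.
Proof. by case=> P [_ [_ [Pres _]]] xc; rewrite Pres // => -[v [[]]]. Qed.

Lemma prox_of_grad (mu : R) (z w : V) :
  0 < mu -> standing_fact_on f rho mu c d -> cball c d z ->
  has_grad (fun y => fine (moreau f mu y)) z w -> prox f mu z (z - mu *: w).
Proof.
move=> mu0 [P [Pprox [_ [_ [_ [Pgrad _]]]]]] zc zg.
rewrite (grad_unique zg (Pgrad _ zc)) scalerA mulfV ?gt_eqF // scale1r.
by rewrite opprB addrC subrK Pprox.
Qed.

(* One step of Algorithm 1 with parameters 0 < gam < lam is the proximal step
   x |-> P_lam f(x): the point p = z - gam w, w = (lam - gam)^{-1}(x - z), is in
   (I + gam df)^{-1}(z), and x = p + lam w puts it in (I + lam df)^{-1}(x). *)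
Lemma algorithm_step_prox (gam lam : R) (x z : V) :
  0 < gam -> gam < lam ->
  standing_fact_on f rho gam c d -> standing_fact_on f rho lam c d ->
  cball c d x -> cball c d z ->
  has_grad (fun y => fine (moreau f gam y)) z ((lam - gam)^-1 *: (x - z)) ->
  prox f lam x (z - (gam / (lam - gam)) *: (x - z)).
Proof.
move=> gam0 gl SFg [P' [_ [_ [Pres' _]]]] xc zc zg.
have lg0 : lam - gam != 0 by rewrite subr_eq0 gt_eqF.
set w := (lam - gam)^-1 *: (x - z) in zg *.
rewrite -scalerA -/w.
have /(prox_of_grad gam0 SFg zc) := zg.
case: SFg => P [_ [_ [Pres _]]]; rewrite Pres // => -[v [Hv Ez]].
have vw : v = w.
  apply: (scalerI (a := gam)); first by rewrite gt_eqF.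
  by apply: (addrI (z - gam *: w)); rewrite -Ez subrK.
rewrite Pres' //; exists v; split => //.
rewrite vw -addrA -scaleNr -scalerDl [- gam + lam]addrC /w scalerA mulfV //.
by rewrite scale1r addrC subrK.
Qed.

End Proximal.

Lemma long_step_decrease (R : realFieldType) (rho lam eps N : R) :
  0 < rho -> 0 < lam -> lam < rho^-1 -> 0 < eps -> eps < N ->
  rho * eps ^+ 2 / 2 <= N ^+ 2 / (2 * lam).
Proof.
move=> rho0 lam0 lr eps0 epsN.
have rl : rho * lam < 1 by move: lr; rewrite -(ltr_pM2l rho0) mulfV ?gt_eqF.
rewrite ler_pdivlMr ?mulr_gt0 //.
have -> : rho * eps ^+ 2 / 2 * (2 * lam) = (rho * lam) * eps ^+ 2 by field.
have : eps ^+ 2 < N ^+ 2 by rewrite !expr2; nra.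
have : 0 < eps ^+ 2 by rewrite exprn_gt0.
nra.
Qed.

Lemma telescope_decrease (R : numDomainType) (u : nat -> R) (c : R) (T : nat) :
  (forall m, (m <= T)%N -> u m.+1 + c <= u m) -> u T.+1 + T.+1%:R * c <= u 0%N.
Proof.
move=> dec; suff : forall m, (m <= T.+1)%N -> u m + m%:R * c <= u 0%N by apply.
elim=> [|m IH] mT; first by rewrite mul0r addr0.
apply: le_trans (IH (ltnW mT)); rewrite -natr1 mulrDl mul1r addrCA addrC lerD2r.
exact: dec.
Qed.

Lemma descent_count (R : realType) (u : nat -> \bar R) (s rho eps : R) (T : nat) :
  0 < rho -> 0 < eps -> u 0%N != -oo%E ->
  (forall m, (m <= T)%N ->
     u m.+1 \is a fin_num /\ (u m.+1 + (rho * eps ^+ 2 / 2)%:E <= u m)%E) ->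
  (s%:E <= u T.+1)%E ->
  ((T%:R)%:E < 2%:E + (2 / rho)%:E * (u 0%N - s%:E) * (eps ^- 2)%:E)%E.
Proof.
move=> rho0 eps0 u0 dec sT; set c := rho * eps ^+ 2 / 2.
have c0 : 0 < c by rewrite !mulr_gt0 ?exprn_gt0 ?invr_gt0.
case Eu0 : (u 0%N) u0 => [a| |] // _; last first.
  rewrite addye // gt0_muley ?lte_fin ?divr_gt0 //.
  by rewrite mulyr gtr0_sg ?invr_gt0 ?exprn_gt0 // mul1e addey // ltry.
have finu m : (m <= T.+1)%N -> u m = (fine (u m))%:E.
  by case: m => [|m] mT; [rewrite Eu0 | rewrite fineK //; case: (dec m mT)].
have sum : fine (u T.+1) + T.+1%:R * c <= a.
  have -> : a = fine (u 0%N) by rewrite Eu0.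
  apply: (telescope_decrease (u := fun m => fine (u m))) => m mT.
  have [_] := dec m mT; rewrite (finu m.+1 mT) (finu m (leqW mT)).
  by rewrite -EFinD lee_fin.
have sle : s <= fine (u T.+1) by rewrite -lee_fin -finu.
rewrite -EFinB -!EFinM -EFinD lte_fin.
have -> : 2 / rho * (a - s) * eps ^- 2 = (a - s) / c by rewrite /c; field; rewrite !gt_eqF.
have : T.+1%:R <= (a - s) / c by rewrite ler_pdivlMr //; lra.
by rewrite -natr1; lra.
Qed.

Theorem theorem4p7 (R : realType) (n : nat)
  (f : 'rV[R]_n -> \bar R) (rho : R) (xbar : 'rV[R]_n)
  (lambar : R) (gam lam : nat -> R) (delta : R) (sigma : nat -> R) (beta : R)
  (x z : nat -> 'rV[R]_n) (xstar : 'rV[R]_n) (eps : R) (T : nat) :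
  (* Standing Setup: f *)
  proper_fun f -> lsc f -> bounded_below f -> 0 < rho ->
  weakly_convex_on rho [set: 'rV[R]_n] f ->
  dom f xbar -> limiting_subdiff f xbar 0 ->
  (* step sizes *)
  0 < lambar ->
  (exists M : R, forall k, `|gam k| <= M /\ `|lam k| <= M) ->
  (forall k, lambar < 2 * gam k /\ 2 * gam k < lam k /\ lam k < rho^-1) ->
  (* delta: Standing Fact and Assumption 1 on B[xbar, delta] *)
  0 < delta ->
  (forall k, standing_fact_on f rho (gam k) xbar delta /\
             standing_fact_on f rho (lam k) xbar delta) ->
  (forall k, convex_on (cball xbar delta) (moreau f (gam k)) /\
             convex_on (cball xbar delta) (moreau f (lam k))) ->
  (* sigma_k, kappa_k, beta *)
  (let L k := 1 + (lam k - gam k) / gam k * (1 + (1 - gam k * rho)^-1) in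
   let kappa k := 1 - 2 * sigma k + sigma k ^+ 2 * L k ^+ 2 in
   (forall k, 0 < sigma k /\ sigma k < 2 / L k ^+ 2) /\
   0 < beta /\
   (forall k, beta < Num.min delta (delta / sigma k * (1 - Num.sqrt (kappa k))))) ->
  (* Algorithm 1 *)
  cball xbar beta (x 0%N) ->
  (forall k, cball xbar beta (x k)) ->
  (forall k, oball xbar delta (z k) /\
     has_grad (fun y => fine (moreau f (gam k) y)) (z k)
              ((lam k - gam k)^-1 *: (x k - z k))) ->
  (forall k, x k.+1 = z k - (gam k / (lam k - gam k)) *: (x k - z k)) ->
  (* limit *)
  vcvg x xstar ->
  f xstar = ereal_inf [set f y | y in cball xbar beta] ->
  (* hypothesis of the theorem *)
  0 < eps ->
  (forall k, (k <= T)%N -> eps < enorm (x k.+1 - x k)) ->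
  ((T%:R)%:E < 2%:E + (2 / rho)%:E * (f (x 0%N) - f xstar) * (eps ^- 2)%:E)%E.
Proof.
move=> [_ fNinfty] _ _ rho0 _ _ _ lambar0 _ Hstep _ Hsf _ [_ [_ Hbeta]] _ Hxb Hz Hx _
  Hstar eps0 Hlong.
have beta_delta : beta < delta by move: (Hbeta 0%N); rewrite lt_min => /andP[].
have x_delta k : cball xbar delta (x k) by apply: le_trans (Hxb k) (ltW _).
have prox_step k : prox f (lam k) (x k) (x k.+1).
  have [g0 [gl _]] := Hstep k; have [zo zg] := Hz k.
  by rewrite Hx; apply: algorithm_step_prox (Hsf k).1 (Hsf k).2 (x_delta k) (ltW zo) zg; lra.
have fin k : f (x k.+1) \is a fin_num := prox_fin_num (Hsf k).2 (x_delta k) (prox_step k).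
have above_star k : (f xstar <= f (x k))%E.
  by rewrite Hstar; apply: ereal_inf_lbound; exists (x k).
have [fs_fin|] := boolP (f xstar \is a fin_num); last first.
  by rewrite fin_numE fNinfty /= negbK => /eqP fs; move: (above_star 1%N) (fin 0%N);
    rewrite fs leye_eq => /eqP ->.
rewrite -(fineK fs_fin).
apply: (descent_count (u := fun k => f (x k))) => // [m mT|]; last first.
  by rewrite fineK // above_star.
split=> //; apply: le_trans (prox_descent (prox_step m)); rewrite leeD2l // lee_fin.
have [g0 [gl lr]] := Hstep m.
by apply: long_step_decrease => //; [lra | exact: Hlong].
Qed.
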